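(* Let $S$ be a classical-quantum program, $s\ge 0$ an integer, $\mathcal{T}$ an $s$-fault transition tree starting with $(S,\emptyset)$, and $\rho$ a quantum state. Then for every position $v$ of the tree schema of $S$, $$\mathrm{supp}\big(q(v_{\mathcal{T}(\rho)})\big)\subseteq\sum_{\mathcal{T}'}\mathrm{supp}\big(q(v_{\mathcal{T}'(\rho)})\big),$$ where the sum (of subspaces, i.e. the span of their union) ranges over all $s$-Pauli-fault transition trees $\mathcal{T}'$ starting with $(S,\emptyset)$ whose faulty transitions occur at exactly the same locations (edges of the tree schema) as the faulty transitions of $\mathcal{T}$.
   Context: Programs, transitions and trees. A classical-quantum program (cq-prog) on qubits is generated by the grammar $S ::= S_1;S_2 \mid q:=|0\rangle \mid U(\bar q)\mid x:=\mathtt{measure}\ q \mid x:=e \mid \mathtt{if}\ b\ \mathtt{then}\ S_1\ \mathtt{else}\ S_2 \mid y:=f(x) \mid \mathtt{repeat}\ S\ \mathtt{until}\ b$. Configurations are triples $\langle S,\sigma,\rho\rangle$ (program or terminated program $\downarrow$, classical state, partial density operator). Ideal transitions: initialization resets $q$ to $|0\rangle$ via $\rho\mapsto\rho_{q:=|0\rangle}:=|0\rangle_q\langle0|\rho|0\rangle_q\langle0|+|0\rangle_q\langle1|\rho|1\rangle_q\langle0|$; $U(\bar q)$ applies $\rho\mapsto U_{\bar q}\rho U_{\bar q}^\dagger$; $x:=\mathtt{measure}\ q$ has two branches setting $x:=c$ and $\rho\mapsto|c\rangle_q\langle c|\rho|c\rangle_q\langle c|$, $c\in\{0,1\}$; classical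 assignments, oracle calls, conditionals and sequencing act in the standard way; $\mathtt{repeat}\ S\ \mathtt{until}\ b$ steps to $S;\mathtt{if}\ b\ \mathtt{then}\ \downarrow\ \mathtt{else}\ \{\mathtt{repeat}\ S\ \mathtt{until}\ b\}$. Faulty transitions replace the quantum operation of an initialization or unitary statement by an arbitrary trace-preserving completely positive map acting only on the same qubits, and replace the two branches of a measurement on $q$ by arbitrary completely positive maps $\mathcal{E}_{0,q},\mathcal{E}_{1,q}$ acting only on $q$ with $\mathcal{E}_{0,q}+\mathcal{E}_{1,q}$ trace-preserving; classical operations are never faulty. An $s$-fault transition tree starting with $(S,\emptyset)$ is a (possibly infinite) tree of configurations with root $\langle S,\emptyset,\widetilde\rho\rangle$ ($\widetilde\rho$ indeterminate), leaves exactly the configurations with program $\downarrow$, measurement nodes with two children (both ideal or both faulty), other nodes one child by an ideal or faulty transition, and at most $s$ faulty transitions on every path; $\mathcal{T}(\rho)$ is obtained by substituting $\rho$ for $\widetilde\rho$. An $s$-Pauli-fault transition tree is one in which every faulty transition has the restricted form: initialization $\rho\mapsto P_q\rho_{q:=|0\rangle}P_q$; unitary $\rho\mapsto P_{\bar q}U_{\bar q}\rho U_{\bar q}^\dagger P_{\bar q}$; measurement branches $\rho\mapsto P_{c,q}|c\rangle_q\langle c|Q_q\rho Q_q|c\rangle_q\langle c|P_{c,q}$ ($c\in\{0,1\}$), with arbitrary Pauli operators on the indicated qubits and the same $Q_q$ for both branches. Tree schema. Since classical operations are never faulty, all such trees starting with $(S,\emptyset)$ have the same shape: a node is identified by its position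 (the sequence of branch choices at measurement nodes along the path from the root), and the program and classical state at each position are independent of the tree. This common shape is the tree schema of $S$. For a position $v$ and a tree $\mathcal{T}$, $v_{\mathcal{T}(\rho)}$ is the node at position $v$ in $\mathcal{T}(\rho)$ and $q(v_{\mathcal{T}(\rho)})$ its quantum component. $\mathrm{supp}(A)$ denotes the range of a positive semidefinite operator $A$. *)

(* Quantum operators on n qubits are represented as
   functions  B n -> B n -> C  where  B n = {ffun 'I_n -> bool}  is the
   computational basis and  C  is an arbitrary numClosedFieldType
   (this includes the complex numbers). *)
From mathcomp Require Import all_boot all_order all_algebra.
Set Implicit Arguments.
Unset Strict Implicit.
Unset Printing Implicit Defensive.
Import Order.TTheory GRing.Theory Num.Theory.
Local Open Scope ring_scope.

Definition basis (n : nat) := {ffun 'I_n -> bool}.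
Definition vec (C : numClosedFieldType) (n : nat) := basis n -> C.
Definition op (C : numClosedFieldType) (n : nat) := basis n -> basis n -> C.

Section LinAlg.
Variables (C : numClosedFieldType) (n : nat).
Local Notation op := (op C n).
Local Notation vec := (vec C n).

Definition opmul (A B : op) : op := fun x y => \sum_(z : basis n) A x z * B z y.
Definition opadd (A B : op) : op := fun x y => A x y + B x y.
Definition opzero : op := fun _ _ => 0.
Definition opid : op := fun x y => (x == y)%:R.
Definition adj (A : op) : op := fun x y => (A y x)^*.
Definition apply (A : op) (v : vec) : vec := fun x => \sum_(y : basis n) A x y * v y.
Definition dotv (u v : vec) : C := \sum_(x : basis n) (u x)^* * v x.
Definition trace (A : op) : C := \sum_(x : basis n) A x x.
Definition opsum (l : seq op) : op := foldr opadd opzero l.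

Definition psd (A : op) : Prop := forall v : vec, 0 <= dotv v (apply A v).
Definition density (rho : op) : Prop := psd rho /\ trace rho = 1.

Definition in_supp (A : op) (u : vec) : Prop := exists w : vec, u = apply A w.

Definition in_span (W : vec -> Prop) (u : vec) : Prop :=
  exists (ws : seq vec) (cs : seq C),
    (forall i, (i < size ws)%N -> W (nth (fun _ => 0) ws i)) /\
    u = fun x => \sum_(i < size ws) cs`_i * (nth (fun _ => 0) ws i) x.

(* A acts only on the qubits in Q, i.e. A = A_Q (x) Id *)
Definition agree_off (Q : seq 'I_n) (x y : basis n) : Prop :=
  forall i, i \notin Q -> x i = y i.
Definition acts_on (Q : seq 'I_n) (A : op) : Prop :=
  (forall x y, ~ agree_off Q x y -> A x y = 0) /\
  (forall x y x' y', agree_off Q x y -> agree_off Q x' y' ->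
     (forall i, i \in Q -> x i = x' i) -> (forall i, i \in Q -> y i = y' i) ->
     A x y = A x' y').

Definition unitary (U : op) : Prop := opmul (adj U) U = opid /\ opmul U (adj U) = opid.

Definition kraus (ks : seq op) (rho : op) : op :=
  opsum [seq opmul (opmul K rho) (adj K) | K <- ks].
Definition kraus_TP (ks : seq op) : Prop :=
  opsum [seq opmul (adj K) K | K <- ks] = opid.

Definition cp_on (Q : seq 'I_n) (E : op -> op) (ks : seq op) : Prop :=
  (forall i, (i < size ks)%N -> acts_on Q (nth opzero ks i)) /\ (forall rho, E rho = kraus ks rho).

Definition tpcp_on (Q : seq 'I_n) (E : op -> op) : Prop :=
  exists ks, cp_on Q E ks /\ kraus_TP ks.

Definition meas_fault_on (Q : seq 'I_n) (E0 E1 : op -> op) : Prop :=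
  exists ks0 ks1, cp_on Q E0 ks0 /\ cp_on Q E1 ks1 /\ kraus_TP (ks0 ++ ks1).

Definition op1 (q : 'I_n) (M : bool -> bool -> C) : op :=
  fun x y => if [forall i, (i != q) ==> (x i == y i)] then M (x q) (y q) else 0.
Definition ketbra (q : 'I_n) (a b : bool) : op :=
  op1 q (fun i j => ((i == a) && (j == b))%:R).

(* Pauli matrices: 0 = I, 1 = X, 2 = Y, 3 = Z  (rows/cols indexed by bits) *)
Definition pauli1 (k : 'I_4) (i j : bool) : C :=
  match val k with
  | 0%N => (i == j)%:R
  | 1%N => (i != j)%:R
  | 2%N => if i == j then 0 else if i then 'i else - 'i
  | _ => if i == j then (if i then -1 else 1) else 0
  end.
Definition pauli_op (p : {ffun 'I_n -> 'I_4}) : op :=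
  fun x y => \prod_(i : 'I_n) pauli1 (p i) (x i) (y i).
Definition pauli_on (Q : seq 'I_n) (P : op) : Prop :=
  exists p : {ffun 'I_n -> 'I_4}, (forall i, i \notin Q -> p i = ord0) /\ P = pauli_op p.

Definition init_map (q : 'I_n) (rho : op) : op :=
  opadd (opmul (opmul (ketbra q false false) rho) (ketbra q false false))
        (opmul (opmul (ketbra q false true) rho) (ketbra q true false)).
Definition unit_map (U : op) (rho : op) : op := opmul (opmul U rho) (adj U).
Definition meas_map (q : 'I_n) (c : bool) (rho : op) : op :=
  opmul (opmul (ketbra q c c) rho) (ketbra q c c).

End LinAlg.

Definition var := nat.
Definition value := nat.
Definition cstate := var -> option value.
Definition empty_cstate : cstate := fun _ => None.
Definition upd (s : cstate) (x : var) (v : option value) : cstate :=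
  fun y => if y == x then v else s y.

Section Programs.
Variables (C : numClosedFieldType) (n : nat).
Local Notation op := (op C n).

(* Expressions, Boolean guards and oracles are shallowly embedded. *)
Inductive prog : Type :=
| PSeq of prog & prog
| PInit of 'I_n
| PUnit of seq 'I_n & op
| PMeas of var & 'I_n
| PAssign of var & (cstate -> value)
| PIf of (cstate -> bool) & prog & prog
| POracle of var & (value -> value) & var
| PRepeat of prog & (cstate -> bool)
| PIfStop of (cstate -> bool) & prog.           (* runtime form: if b then (terminated) else S *)

Fixpoint wf_prog (S0 : prog) : Prop :=
  match S0 with
  | PSeq S1 S2 => wf_prog S1 /\ wf_prog S2
  | PUnit qs U => unitary U /\ acts_on qs U
  | PIf _ S1 S2 => wf_prog S1 /\ wf_prog S2
  | PRepeat S1 _ => wf_prog S1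
  | PIfStop _ S1 => wf_prog S1
  | _ => True
  end.

Inductive qaction : Type :=
| QSkip
| QInit of 'I_n
| QUnit of seq 'I_n & op
| QMeas of 'I_n & bool.

(* program component: None = terminated *)
Definition cfg := (option prog * cstate)%type.

(* Successors of a (non-terminated) configuration; the list has two
   elements (outcomes 0, 1) for measurements and one element otherwise. *)
Fixpoint step (S0 : prog) (s : cstate) : seq (option prog * cstate * qaction) :=
  match S0 with
  | PSeq S1 S2 =>
      [seq (Some (match t.1.1 with None => S2 | Some S1' => PSeq S1' S2 end), t.1.2, t.2)
      | t <- step S1 s]
  | PInit q => [:: (None, s, QInit q)]
  | PUnit qs U => [:: (None, s, QUnit qs U)]
  | PMeas x q => [:: (None, upd s x (Some 0%N), QMeas q false);
                     (None, upd s x (Some 1%N), QMeas q true)]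
  | PAssign x e => [:: (None, upd s x (Some (e s)), QSkip)]
  | PIf b S1 S2 => [:: (Some (if b s then S1 else S2), s, QSkip)]
  | POracle y f x => [:: (None, upd s y (omap f (s x)), QSkip)]
  | PRepeat S1 b => [:: (Some (PSeq S1 (PIfStop b (PRepeat S1 b))), s, QSkip)]
  | PIfStop b S1 => [:: (if b s then None else Some S1, s, QSkip)]
  end.

(* A position is the list of child indices chosen along the path from the
   root (false = first/only child or outcome 0, true = outcome 1). *)
Definition position := seq bool.

(* choice of transition at an internal node: ideal, or faulty with the
   quantum map(s) used (indexed by the measurement outcome; for
   non-measurement nodes only index false is used) *)
Inductive tchoice : Type :=
| Ideal
| Faulty of (bool -> op -> op).

Definition is_faulty (c : tchoice) : bool := if c is Faulty _ then true else false.

(* A transition tree (with indeterminate root state) is described by the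
   transition choice at each position of the tree schema. *)
Definition tree := position -> tchoice.

Definition ideal_map (a : qaction) : op -> op :=
  match a with
  | QSkip => id
  | QInit q => init_map q
  | QUnit _ U => unit_map U
  | QMeas q c => meas_map q c
  end.

Definition edge_map (ch : tchoice) (a : qaction) : op -> op :=
  match ch with
  | Ideal => ideal_map a
  | Faulty E => match a with QMeas _ c => E c | _ => E false end
  end.

(* Returns the node reached (program,
   classical state, quantum state), or None if v is not a position. *)
Fixpoint walk (T : tree) (pre : position) (c : cfg) (rho : op) (v : position)
  : option (cfg * op) :=
  match v with
  | [::] => Some (c, rho)
  | b :: v' =>
      match c.1 with
      | None => None
      | Some S1 =>
          let succ := step S1 c.2 in
          if (nat_of_bool b < size succ)%N then
            let t := nth (None, c.2, QSkip) succ (nat_of_bool b) in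
            walk T (rcons pre b) (t.1.1, t.1.2) (edge_map (T pre) t.2 rho) v'
          else None
      end
  end.

Definition node (S0 : prog) (T : tree) (rho : op) (v : position) : option (cfg * op) :=
  walk T [::] (Some S0, empty_cstate) rho v.

(* tree schema: program and classical state at position v (independent of T) *)
Definition schema (S0 : prog) (v : position) : option cfg :=
  omap fst (node S0 (fun _ => Ideal) (@opzero C n) v).

Definition in_schema (S0 : prog) (v : position) : Prop := schema S0 v <> None.

Definition internal (S0 : prog) (v : position) : Prop :=
  exists S' s, schema S0 v = Some (Some S', s).

Definition qnode (S0 : prog) (T : tree) (rho : op) (v : position) : op :=
  match node S0 T rho v with Some (_, r) => r | None => @opzero C n end.

Definition fault_ok (S' : prog) (s : cstate) (E : bool -> op -> op) : Prop :=
  match step S' s with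
  | (_, _, QInit q) :: _ => tpcp_on [:: q] (E false)
  | (_, _, QUnit qs _) :: _ => tpcp_on qs (E false)
  | (_, _, QMeas q _) :: _ => meas_fault_on [:: q] (E false) (E true)
  | _ => False   (* classical operations are never faulty *)
  end.

Definition pauli_fault_ok (S' : prog) (s : cstate) (E : bool -> op -> op) : Prop :=
  match step S' s with
  | (_, _, QInit q) :: _ =>
      exists P, pauli_on [:: q] P /\
        forall rho, E false rho = opmul (opmul P (init_map q rho)) P
  | (_, _, QUnit qs U) :: _ =>
      exists P, pauli_on qs P /\
        forall rho, E false rho = opmul (opmul P (unit_map U rho)) P
  | (_, _, QMeas q _) :: _ =>
      exists (P : bool -> op) Q, (forall c, pauli_on [:: q] (P c)) /\ pauli_on [:: q] Q /\
        forall c rho, E c rho =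
          opmul (opmul (P c) (meas_map q c (opmul (opmul Q rho) Q))) (P c)
  | _ => False
  end.

Definition nfaults (T : tree) (v : position) : nat :=
  count (fun i => is_faulty (T (take i v))) (iota 0 (size v)).

Definition fault_tree (s : nat) (S0 : prog) (T : tree) : Prop :=
  (forall v S' cs E, schema S0 v = Some (Some S', cs) -> T v = Faulty E -> fault_ok S' cs E) /\
  (forall v, in_schema S0 v -> (nfaults T v <= s)%N).

Definition pauli_fault_tree (s : nat) (S0 : prog) (T : tree) : Prop :=
  fault_tree s S0 T /\
  (forall v S' cs E, schema S0 v = Some (Some S', cs) -> T v = Faulty E ->
     pauli_fault_ok S' cs E).

Definition same_fault_locations (S0 : prog) (T T' : tree) : Prop :=
  forall v, internal S0 v -> is_faulty (T v) = is_faulty (T' v).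

End Programs.

From mathcomp Require Import all_boot all_order all_algebra ring.
From Stdlib Require Import FunctionalExtensionality.

(* The state at a child is E(A), where A is
   the state at the parent and E = sum_K K . K^dagger, and for psd A the range
   of E(A) is spanned by the images K(supp A).  By induction, supp A lies in the
   span of the supports at the parent of the Pauli trees with the fault
   locations of T.  On an ideal edge these trees take the ideal transition too.
   On a faulty edge each Kraus operator K acts only on the qubits of the
   location, so it is a linear combination of Paulis (after splitting off the
   ideal unitary) or, on one qubit, of the |a><b| = X^a |0><b|
   = X^(a+c) |c><c| X^(b+c).  Each term is a Kraus operator of a Pauli fault,
   and installing that fault at the location of a Pauli tree leaves the state
   at the parent unchanged. *)

Set Implicit Arguments.
Unset Strict Implicit.
Unset Printing Implicit Defensive.
Import Order.TTheory GRing.Theory Num.Theory.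
Local Open Scope ring_scope.

Ltac fext := let x := fresh "x" in apply: functional_extensionality => x.
Ltac fext2 := let x := fresh "x" in let y := fresh "y" in
  apply: functional_extensionality => x; apply: functional_extensionality => y.

Section OperatorAlgebra.
Variables (C : numClosedFieldType) (n : nat).
Local Notation op := (op C n).
Local Notation vec := (vec C n).

Lemma opmulA (A B D : op) : opmul (opmul A B) D = opmul A (opmul B D).
Proof.
fext2; rewrite /opmul.
under eq_bigr do rewrite big_distrl /=.
rewrite exchange_big /=; apply: eq_bigr => z _.
by rewrite big_distrr /=; apply: eq_bigr => w _; rewrite mulrA.
Qed.

Lemma opmulDl (A B D : op) : opmul (opadd A B) D = opadd (opmul A D) (opmul B D).
Proof. by fext2; rewrite /opmul /opadd -big_split; apply: eq_bigr => z _; rewrite mulrDl. Qed.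

Lemma opmulDr (A B D : op) : opmul D (opadd A B) = opadd (opmul D A) (opmul D B).
Proof. by fext2; rewrite /opmul /opadd -big_split; apply: eq_bigr => z _; rewrite mulrDr. Qed.

Lemma opmul_idr (A : op) : opmul A (@opid C n) = A.
Proof.
fext2; rewrite /opmul /opid (bigD1 y) //= eqxx mulr1 big1 ?addr0 // => z /negbTE zy.
by rewrite zy mulr0.
Qed.

Lemma opmul_idl (A : op) : opmul (@opid C n) A = A.
Proof.
fext2; rewrite /opmul /opid (bigD1 x) //= eqxx mul1r big1 ?addr0 // => z /negbTE zx.
by rewrite eq_sym zx mul0r.
Qed.

Lemma opadd0 (A : op) : opadd A (@opzero C n) = A.
Proof. by fext2; rewrite /opadd /opzero addr0. Qed.

Lemma adj_opmul (A B : op) : adj (opmul A B) = opmul (adj B) (adj A).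
Proof. by fext2; rewrite /adj /opmul rmorph_sum; apply: eq_bigr => z _; rewrite rmorphM mulrC. Qed.

Lemma adj_opid : adj (@opid C n) = @opid C n.
Proof. by fext2; rewrite /adj /opid eq_sym; case: (x == y); rewrite ?rmorph1 ?rmorph0. Qed.

Lemma apply_opmul (A B : op) (w : vec) : apply (opmul A B) w = apply A (apply B w).
Proof.
fext; rewrite /apply /opmul.
under eq_bigr do rewrite big_distrl /=.
rewrite exchange_big /=; apply: eq_bigr => z _.
by rewrite big_distrr /=; apply: eq_bigr => y _; rewrite mulrA.
Qed.

Lemma apply_opadd (A B : op) (w : vec) :
  apply (opadd A B) w = fun x => apply A w x + apply B w x.
Proof. by fext; rewrite /apply /opadd -big_split; apply: eq_bigr => y _; rewrite mulrDl. Qed.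

Lemma apply_opzero (w : vec) : apply (@opzero C n) w = fun _ => 0.
Proof. by fext; rewrite /apply big1 // => y _; rewrite /opzero mul0r. Qed.

Lemma apply_addv (A : op) (u w : vec) :
  apply A (fun x => u x + w x) = fun x => apply A u x + apply A w x.
Proof. by fext; rewrite /apply -big_split; apply: eq_bigr => y _; rewrite mulrDr. Qed.

Lemma apply_scalev (A : op) (c : C) (u : vec) :
  apply A (fun x => c * u x) = fun x => c * apply A u x.
Proof. by fext; rewrite /apply big_distrr; apply: eq_bigr => y _; rewrite mulrCA. Qed.

Lemma apply_zerov (A : op) : apply A (fun _ => 0) = fun _ => 0.
Proof. by fext; rewrite /apply big1 // => y _; rewrite mulr0. Qed.

Lemma apply_lincomb (I : finType) (c : I -> C) (A : I -> op) (w : vec) :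
  apply (fun x y => \sum_i c i * A i x y) w = fun x => \sum_i c i * apply (A i) w x.
Proof.
fext; rewrite /apply.
under eq_bigr do rewrite big_distrl /=.
rewrite exchange_big /=; apply: eq_bigr => i _.
by rewrite big_distrr /=; apply: eq_bigr => y _; rewrite mulrA.
Qed.

Lemma apply_lincomb2 (c : bool -> bool -> C) (A : bool -> bool -> op) (w : vec) :
  apply (fun x y => \sum_(a : bool) \sum_(b : bool) c a b * A a b x y) w =
  fun x => \sum_(a : bool) \sum_(b : bool) c a b * apply (A a b) w x.
Proof.
fext; rewrite /apply.
under eq_bigr do rewrite big_distrl /=; rewrite exchange_big /=; apply: eq_bigr => a _.
under eq_bigr do rewrite big_distrl /=; rewrite exchange_big /=; apply: eq_bigr => b _.
by rewrite big_distrr /=; apply: eq_bigr => y _; rewrite mulrA.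
Qed.

Lemma dotv_adj (u w : vec) (A : op) : dotv u (apply A w) = dotv (apply (adj A) u) w.
Proof.
rewrite /dotv /apply.
under eq_bigr do rewrite big_distrr /=.
rewrite exchange_big /=; apply: eq_bigr => y _.
rewrite rmorph_sum big_distrl /=; apply: eq_bigr => x _.
by rewrite /adj rmorphM /= conjCK mulrA [_ * A x y]mulrC.
Qed.

Lemma dot0v (w : vec) : dotv (fun _ => 0) w = 0.
Proof. by rewrite /dotv big1 // => y _; rewrite rmorph0 mul0r. Qed.

Lemma dotv_sum (I : Type) (r : seq I) (F : I -> vec) (u : vec) :
  dotv u (fun x => \sum_(i <- r) F i x) = \sum_(i <- r) dotv u (F i).
Proof. by rewrite /dotv; under eq_bigr do rewrite big_distrr /=; rewrite exchange_big. Qed.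

End OperatorAlgebra.

Section Span.
Variables (C : numClosedFieldType) (n : nat).
Local Notation op := (op C n).
Local Notation vec := (vec C n).

Inductive span_gen (W : vec -> Prop) : vec -> Prop :=
| span_mem w : W w -> span_gen W w
| span_zero : span_gen W (fun _ => 0)
| span_add u w : span_gen W u -> span_gen W w -> span_gen W (fun x => u x + w x)
| span_scale c u : span_gen W u -> span_gen W (fun x => c * u x).

Lemma span_gen_sum (W : vec -> Prop) (I : Type) (r : seq I) (P : pred I) (F : I -> vec) :
  (forall i, P i -> span_gen W (F i)) -> span_gen W (fun x => \sum_(i <- r | P i) F i x).
Proof.
move=> HF; elim: r => [|i r IH].
  have -> : (fun x => \sum_(i <- [::] | P i) F i x) = (fun _ => 0) by fext; rewrite big_nil.
  exact: span_zero.
case Pi: (P i).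
  have -> : (fun x => \sum_(j <- i :: r | P j) F j x) =
            (fun x => F i x + \sum_(j <- r | P j) F j x) by fext; rewrite big_cons Pi.
  by apply: span_add => //; apply: HF.
have -> : (fun x => \sum_(j <- i :: r | P j) F j x) =
          (fun x => \sum_(j <- r | P j) F j x) by fext; rewrite big_cons Pi.
exact: IH.
Qed.

Lemma span_gen_apply (W W' : vec -> Prop) (A : op) (u : vec) :
  (forall w, W w -> span_gen W' (apply A w)) -> span_gen W u -> span_gen W' (apply A u).
Proof.
move=> HA; elim=> {u} [w /HA //| | u w _ Hu _ Hw | c u _ Hu].
- by rewrite apply_zerov; apply: span_zero.
- by rewrite apply_addv; apply: span_add.
- by rewrite apply_scalev; apply: span_scale.
Qed.

Lemma in_span_padded (W : vec -> Prop) (u : vec) : in_span W u ->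
  exists ws cs, size cs = size ws /\
    (forall i, (i < size ws)%N -> W (nth (fun _ => 0) ws i)) /\
    u = fun x => \sum_(i < size ws) cs`_i * (nth (fun _ => 0) ws i) x.
Proof.
case=> ws [cs [Hw ->]]; exists ws, (mkseq (fun i => cs`_i) (size ws)).
split; first by rewrite size_mkseq.
by split=> //; fext; apply: eq_bigr => i _; rewrite nth_mkseq.
Qed.

Lemma span_gen_in_span (W : vec -> Prop) (u : vec) : span_gen W u -> in_span W u.
Proof.
elim=> {u} [w Ww | | u w _ /in_span_padded [ws1 [cs1 [E1 [H1 ->]]]]
                      _ /in_span_padded [ws2 [cs2 [E2 [H2 ->]]]]
               | c u _ /in_span_padded [ws [cs [E [H ->]]]]].
- exists [:: w], [:: 1]; split; first by case.
  by fext; rewrite big_ord1 /= mul1r.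
- by exists [::], [::]; split=> //; fext; rewrite big_ord0.
- exists (ws1 ++ ws2), (cs1 ++ cs2); split.
    move=> i; rewrite size_cat nth_cat => Hi; case: ifP => Hi1; first exact: H1.
    by apply: H2; rewrite -(ltn_add2l (size ws1)) subnKC // leqNgt Hi1.
  fext; rewrite -!(big_mkord xpredT (fun i => cs1`_i * nth (fun _ => 0) ws1 i x))
    -!(big_mkord xpredT (fun i => cs2`_i * nth (fun _ => 0) ws2 i x))
    -!(big_mkord xpredT (fun i => (cs1 ++ cs2)`_i * nth (fun _ => 0) (ws1 ++ ws2) i x)).
  rewrite size_cat (big_cat_nat _ (leq_addr _ _)) //=; congr (_ + _).
    by apply: eq_big_nat => i /andP [_ Hi]; rewrite !nth_cat E1 Hi.
  rewrite -[X in _ = \sum_(X <= _ < _) _](add0n (size ws1)) big_addn addKn.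
  by apply: eq_big_nat => i _; rewrite !nth_cat E1 ltnNge leq_addl /= addnK.
- exists ws, (map (fun a => c * a) cs); split=> //.
  by fext; rewrite big_distrr /=; apply: eq_bigr => i _; rewrite (nth_map 0) ?E // mulrA.
Qed.

End Span.

Section Support.
Variables (C : numClosedFieldType) (n : nat).
Local Notation op := (op C n).
Local Notation vec := (vec C n).
Local Notation N := #|{: basis n}|.

Lemma sum_basis_enum (F : basis n -> C) :
  \sum_(b : basis n) F b = \sum_(j < N) F (enum_val j).
Proof. by rewrite -big_enum_val /=; apply: eq_bigl. Qed.

(* The range of A is the orthogonal complement of the kernel of its adjoint;
   the proof transports the question to row spaces of matrices. *)
Lemma in_supp_orth_ker_adj (A : op) (y : vec) :
  (forall x : vec, apply (adj A) x = (fun _ => 0) -> dotv x y = 0) -> in_supp A y.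
Proof.
move=> Horth.
pose e := @enum_val (basis n) predT.
pose R : 'M[C]_N := \matrix_(i, j) A (e j) (e i).
pose yr : 'rV[C]_N := \row_j y (e j).
have /submxP [D HD] : (yr <= R)%MS.
  rewrite submxE; move: (cokermx R) (mulmx_coker R) => K HK.
  apply/eqP/matrixP => i0 k; rewrite !mxE.
  pose x : vec := fun b => (K (enum_rank b) k)^*.
  have Hx : apply (adj A) x = (fun _ => 0).
    fext; rewrite /apply /adj /x.
    transitivity (((R *m K) (enum_rank x0) k)^*); last by rewrite HK mxE rmorph0.
    rewrite mxE rmorph_sum sum_basis_enum; apply: eq_bigr => j _.
    by rewrite rmorphM /= enum_valK !mxE /e enum_rankK.
  rewrite -[RHS](Horth x Hx) /dotv sum_basis_enum; apply: eq_bigr => j _.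
  by rewrite /x enum_valK conjCK mxE mulrC.
exists (fun b => D 0 (enum_rank b)); fext; rewrite /apply sum_basis_enum.
have := congr1 (fun M : 'M[C]_(1, N) => M 0 (enum_rank x)) HD.
rewrite /yr !mxE /e enum_rankK => ->.
by apply: eq_bigr => j _; rewrite mxE /e enum_valK enum_rankK mulrC.
Qed.

Lemma real_quadratic_ge0_coef1 (b c : C) : 0 <= c ->
  (forall t : C, t \is Num.real -> 0 <= t * b + t ^+ 2 * c) -> b = 0.
Proof.
move=> c0 Hq.
have b_real : b \is Num.real.
  have /ger0_real bc := Hq 1 (rpred1 _); rewrite mul1r expr1n mul1r in bc.
  by rewrite -(addrK c b) rpredB // ger0_real.
have c1 : c + 1 != 0 by rewrite gt_eqF // ltr_wpDl // ltr01.
have t_real : - b / (c + 1) \is Num.real.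
  by rewrite rpredM ?rpredN // realV rpredD ?rpred1 // ger0_real.
have := Hq _ t_real.
have -> : - b / (c + 1) * b + (- b / (c + 1)) ^+ 2 * c = - (b / (c + 1)) ^+ 2 by field.
rewrite oppr_ge0 => le0.
have ge0 : 0 <= (b / (c + 1)) ^+ 2.
  by apply: real_exprn_even_ge0 => //; rewrite rpredM // realV rpredD ?rpred1 // ger0_real.
have /eqP : (b / (c + 1)) ^+ 2 = 0 by apply/eqP; rewrite eq_le le0 ge0.
by rewrite sqrf_eq0 mulf_eq0 invr_eq0 (negbTE c1) orbF => /eqP.
Qed.

Lemma dotv_apply_add (A : op) (y z : vec) (t : C) :
  dotv (fun x => y x + t * z x) (apply A (fun x => y x + t * z x)) =
  dotv y (apply A y) + t * dotv y (apply A z) + t^* * dotv z (apply A y)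
  + t^* * t * dotv z (apply A z).
Proof.
rewrite apply_addv apply_scalev /dotv !big_distrr -!big_split /=.
by apply: eq_bigr => x _; rewrite rmorphD rmorphM /=; ring.
Qed.

(* Cauchy-Schwarz for the semi-inner product of a psd operator, in its
   degenerate case; obtained from the quadratics t |-> <y + t z, A (y + t z)>
   along the real and imaginary axes. *)
Lemma psd_dotv_eq0 (A : op) (y : vec) : psd A -> dotv y (apply A y) = 0 ->
  forall z, dotv y (apply A z) = 0.
Proof.
move=> HA Hy z.
set a := dotv y (apply A z); set b := dotv z (apply A y); set c := dotv z (apply A z).
have c0 : 0 <= c by apply: HA.
have ab0 : a + b = 0.
  apply: (real_quadratic_ge0_coef1 c0) => t tr.
  have := HA (fun x => y x + t * z x).
  by rewrite dotv_apply_add Hy (conj_Creal tr) -/a -/b -/c; congr (0 <= _); ring.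
have iab0 : 'i * (a - b) = 0.
  apply: (real_quadratic_ge0_coef1 c0) => t tr.
  have := HA (fun x => y x + ('i * t) * z x).
  rewrite dotv_apply_add Hy -/a -/b -/c rmorphM /= (conj_Creal tr) conjCi.
  congr (0 <= _); have -> : - 'i * t * ('i * t) * c = - ('i * 'i) * t ^+ 2 * c by ring.
  by rewrite mulCii opprK mul1r; ring.
move/eqP: iab0; rewrite mulf_eq0 (negbTE (@neq0Ci C)) /= subr_eq0 => /eqP ab.
move: ab0; rewrite ab -mulr2n -mulr_natr => /eqP.
by rewrite mulf_eq0 pnatr_eq0 orbF => /eqP.
Qed.

Lemma apply_kraus (ks : seq op) (A : op) (x : vec) :
  apply (kraus ks A) x = fun y => \sum_(K <- ks) apply K (apply A (apply (adj K) x)) y.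
Proof.
elim: ks => [|K ks IH]; first by rewrite /kraus /= apply_opzero; fext; rewrite big_nil.
rewrite /kraus /= apply_opadd -/(kraus ks A) IH; fext.
by rewrite big_cons !apply_opmul.
Qed.

Lemma dotv_kraus (ks : seq op) (A : op) (x : vec) :
  dotv x (apply (kraus ks A) x) =
  \sum_(K <- ks) dotv (apply (adj K) x) (apply A (apply (adj K) x)).
Proof. by rewrite apply_kraus dotv_sum; apply: eq_bigr => K _; rewrite dotv_adj. Qed.

Lemma psd_kraus (ks : seq op) (A : op) : psd A -> psd (kraus ks A).
Proof. by move=> HA v; rewrite dotv_kraus; apply: sumr_ge0 => K _; apply: HA. Qed.

(* A vector x orthogonal to the range of sum_K K A K^dagger has <K^dagger x, A K^dagger x> = 0
   for every K, hence K^dagger x is orthogonal to the range of A. *)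
Lemma kraus_supp (ks : seq op) (A : op) (i : nat) (w : vec) :
  psd A -> (i < size ks)%N -> in_supp A w ->
  in_supp (kraus ks A) (apply (nth (@opzero C n) ks i) w).
Proof.
move=> HA Hi [z ->]; apply: in_supp_orth_ker_adj => x Hx.
rewrite dotv_adj; apply: psd_dotv_eq0 => //.
have : dotv x (apply (kraus ks A) x) = 0 by rewrite dotv_adj Hx dot0v.
rewrite dotv_kraus (big_nth (@opzero C n)) big_mkord => /psumr_eq0P.
move=> H; apply: (H _ (Ordinal Hi)) => // j _; exact: HA.
Qed.

Lemma span_kraus_supp (W W' : vec -> Prop) (ks : seq op) (A : op) (u : vec) :
  in_supp (kraus ks A) u -> (forall y, in_supp A y -> span_gen W y) ->
  (forall i, (i < size ks)%N -> forall w, W w -> span_gen W' (apply (nth (@opzero C n) ks i) w)) ->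
  span_gen W' u.
Proof.
move=> [z ->] HA HK; rewrite apply_kraus.
have -> : (fun y => \sum_(K <- ks) apply K (apply A (apply (adj K) z)) y) =
    (fun y => \sum_(i < size ks | true) (fun i : 'I_(size ks) => let K := nth (@opzero C n) ks i in
       apply K (apply A (apply (adj K) z))) i y).
  by fext; rewrite (big_nth (@opzero C n)) big_mkord.
apply: span_gen_sum => i _; apply: span_gen_apply (HK i (ltn_ord i)) _.
by apply: HA; eexists.
Qed.

End Support.

Section Tensor.
Variables (C : numClosedFieldType) (n : nat).
Local Notation op := (op C n).

Definition tensor (f : 'I_n -> bool -> bool -> C) : op :=
  fun x y => \prod_(i : 'I_n) f i (x i) (y i).

Definition id1 (u v : bool) : C := (u == v)%:R.

Lemma tensor_mul (f g : 'I_n -> bool -> bool -> C) :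
  opmul (tensor f) (tensor g) = tensor (fun i u v => \sum_(b : bool) f i u b * g i b v).
Proof. by fext2; rewrite /tensor /opmul bigA_distr_bigA /=; apply: eq_bigr => z _; rewrite -big_split. Qed.

Lemma adj_tensor (f : 'I_n -> bool -> bool -> C) :
  adj (tensor f) = tensor (fun i u v => (f i v u)^*).
Proof. by fext2; rewrite /adj /tensor rmorph_prod. Qed.

Lemma eq_tensor (f g : 'I_n -> bool -> bool -> C) :
  (forall i u v, f i u v = g i u v) -> tensor f = tensor g.
Proof. by move=> fg; fext2; rewrite /tensor; apply: eq_bigr => i _; rewrite fg. Qed.

Lemma prod_nat_forall (P : 'I_n -> bool) :
  \prod_(i : 'I_n) ((P i)%:R : C) = ([forall i, P i])%:R.
Proof.
case: (boolP [forall i, P i]) => [/forallP HP|]; first by rewrite big1 // => i _; rewrite HP.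
by rewrite negb_forall => /existsP [i /negbTE Pi]; rewrite (bigD1 i) //= Pi mul0r.
Qed.

Lemma tensor_id1 : tensor (fun _ => id1) = @opid C n.
Proof.
fext2; rewrite /tensor /id1 prod_nat_forall /opid; congr ((nat_of_bool _)%:R).
apply/forallP/eqP => [H|-> i //]; by apply/ffunP => i; apply/eqP.
Qed.

Lemma pauli_opE (p : {ffun 'I_n -> 'I_4}) : pauli_op C p = tensor (fun i => pauli1 C (p i)).
Proof. by []. Qed.

Lemma pauli1_mul_self (k : 'I_4) (u v : bool) :
  \sum_(b : bool) pauli1 C k u b * pauli1 C k b v = id1 u v.
Proof.
rewrite /pauli1 /id1 big_bool /=.
case: k => [[|[|[|[|k]]]] Hk] /=; case: u; case: v => /=;
  rewrite ?mul0r ?mulr0 ?add0r ?addr0 ?mulr1 ?mul1r ?mulrN ?mulNr ?opprK ?mulCii //.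
all: by rewrite ?mulr1 // opprK.
Qed.

Lemma pauli1_adj (k : 'I_4) (u v : bool) : (pauli1 C k v u)^* = pauli1 C k u v.
Proof.
rewrite /pauli1.
case: k => [[|[|[|[|k]]]] Hk] /=; case: u; case: v => /=;
  rewrite ?rmorph0 ?rmorph1 ?rmorphN ?rmorph1 ?conjCi ?opprK //.
by rewrite /= conjCi opprK.
Qed.

Lemma adj_pauli (p : {ffun 'I_n -> 'I_4}) : adj (pauli_op C p) = pauli_op C p.
Proof. by rewrite pauli_opE adj_tensor; apply: eq_tensor => i u v; rewrite pauli1_adj. Qed.

Lemma pauli_mul_self (p : {ffun 'I_n -> 'I_4}) : opmul (pauli_op C p) (pauli_op C p) = @opid C n.
Proof. by rewrite pauli_opE tensor_mul -tensor_id1; apply: eq_tensor => i u v; rewrite pauli1_mul_self. Qed.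

(* coefficients of |a><b| in the basis I, X, Y, Z of single-qubit matrices *)
Definition ketbra1_coef (a b : bool) (k : 'I_4) : C :=
  match val k with
  | 0%N => (a == b)%:R / 2
  | 1%N => (a != b)%:R / 2
  | 2%N => if a == b then 0 else if a then - 'i / 2 else 'i / 2
  | _ => if a == b then (if a then -1/2 else 1/2) else 0
  end.

Lemma ketbra1_pauli_expansion (a b u v : bool) :
  \sum_(k < 4) ketbra1_coef a b k * pauli1 C k u v = ((u == a) && (v == b))%:R.
Proof.
rewrite !big_ord_recl big_ord0 /ketbra1_coef /pauli1 /=.
have two_neq0 : (2 : C) != 0 by rewrite pnatr_eq0.
have E (z w : C) : z / 2 * w = z * w / 2 by ring.
case: a; case: b; case: u; case: v => /=;
  rewrite ?mul0r ?mulr0 ?add0r ?addr0 ?mulr1 ?mul1r //.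
all: by rewrite ?E ?mulNr ?mulrN ?mulCii ?opprK; field.
Qed.

Lemma tensor_pauli_expansion (c : 'I_n -> 'I_4 -> C) :
  tensor (fun i u v => \sum_(k < 4) c i k * pauli1 C k u v) =
  fun x y => \sum_(p : {ffun 'I_n -> 'I_4}) (\prod_i c i (p i)) * pauli_op C p x y.
Proof. by fext2; rewrite /tensor bigA_distr_bigA /=; apply: eq_bigr => p _; rewrite -big_split. Qed.

End Tensor.

Section ActsOn.
Variables (C : numClosedFieldType) (n : nat).
Local Notation op := (op C n).

Definition agree_offb (Q : seq 'I_n) (x y : basis n) := [forall i, (i \notin Q) ==> (x i == y i)].

Lemma agree_offP (Q : seq 'I_n) (x y : basis n) : reflect (agree_off Q x y) (agree_offb Q x y).
Proof.
apply: (iffP forallP) => H i; first by move=> iQ; have := H i; rewrite iQ => /eqP.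
by apply/implyP => iQ; apply/eqP; apply: H.
Qed.

Lemma acts_on_tensor (Q : seq 'I_n) (f : 'I_n -> bool -> bool -> C) :
  (forall i, i \notin Q -> f i = @id1 C) -> acts_on Q (tensor f).
Proof.
move=> Hf; split.
  move=> x y /agree_offP; rewrite negb_forall => /existsP [i].
  rewrite negb_imply => /andP [iQ /negbTE xy].
  by rewrite /tensor (bigD1 i) //= Hf // /id1 xy mul0r.
move=> x y x' y' /agree_offP /forallP A1 /agree_offP /forallP A2 E1 E2.
rewrite /tensor; apply: eq_bigr => i _.
case iQ: (i \in Q); first by rewrite E1 ?E2.
have := A1 i; have := A2 i; rewrite iQ /= => /eqP -> /eqP ->.
by rewrite Hf ?iQ // /id1 !eqxx.
Qed.

Lemma acts_on_pauli (Q : seq 'I_n) (p : {ffun 'I_n -> 'I_4}) :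
  (forall i, i \notin Q -> p i = ord0) -> acts_on Q (pauli_op C p).
Proof. by move=> Hp; rewrite pauli_opE; apply: acts_on_tensor => i iQ; rewrite Hp. Qed.

Lemma acts_on_lincomb (J : finType) (Q : seq 'I_n) (c : J -> C) (A : J -> op) :
  (forall j, c j != 0 -> acts_on Q (A j)) -> acts_on Q (fun x y => \sum_j c j * A j x y).
Proof.
move=> HA; split.
  move=> x y nag; rewrite big1 // => j _.
  case: (eqVneq (c j) 0) => [->|cj]; first by rewrite mul0r.
  by rewrite (proj1 (HA j cj) x y nag) mulr0.
move=> x y x' y' a1 a2 e1 e2; apply: eq_bigr => j _.
case: (eqVneq (c j) 0) => [->|cj]; first by rewrite !mul0r.
by rewrite (proj2 (HA j cj) x y x' y' a1 a2 e1 e2).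
Qed.

Definition restrict (Q : seq 'I_n) (z : basis n) : basis n :=
  [ffun i => if i \in Q then z i else false].

(* the i-th tensor factor of |a><b|_Q (x) Id, for a, b vanishing off Q *)
Definition elem_factor (Q : seq 'I_n) (a b : basis n) (i : 'I_n) (u v : bool) : C :=
  (if i \in Q then (u == a i) && (v == b i) else [&& u == v, ~~ a i & ~~ b i])%:R.

Lemma elem_factor_forall (Q : seq 'I_n) (a b x y : basis n) :
  [forall i, if i \in Q then (x i == a i) && (y i == b i) else [&& x i == y i, ~~ a i & ~~ b i]]
  = [&& a == restrict Q x, b == restrict Q y & agree_offb Q x y].
Proof.
apply/idP/idP.
  move/forallP=> H; apply/and3P; split.
  - apply/eqP/ffunP => i; rewrite ffunE; have := H i.
    by case: (i \in Q) => /=; [case/andP=> /eqP-> _| case/and3P => _ /negbTE -> _].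
  - apply/eqP/ffunP => i; rewrite ffunE; have := H i.
    by case: (i \in Q) => /=; [case/andP=> _ /eqP-> | case/and3P => _ _ /negbTE ->].
  - apply/forallP => i; apply/implyP => iQ; have := H i; rewrite (negbTE iQ).
    by case/and3P.
case/and3P => /eqP-> /eqP-> /forallP Hag; apply/forallP => i; rewrite !ffunE.
case iQ: (i \in Q) => /=; first by rewrite !eqxx.
by have := implyP (Hag i); rewrite iQ => /(_ isT) ->.
Qed.

Lemma sum_basis_delta (F : basis n -> C) (a0 : basis n) :
  \sum_(a : basis n) ((a == a0)%:R * F a) = F a0.
Proof. by rewrite (bigD1 a0) //= eqxx mul1r big1 ?addr0 // => a /negbTE ->; rewrite mul0r. Qed.

Lemma acts_on_elem_expansion (Q : seq 'I_n) (M : op) : acts_on Q M ->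
  M = fun x y => \sum_(a : basis n) \sum_(b : basis n) M a b * tensor (elem_factor Q a b) x y.
Proof.
case=> H1 H2; fext2.
under eq_bigr do under eq_bigr do
  rewrite /tensor /elem_factor prod_nat_forall elem_factor_forall -!mulnb !natrM.
transitivity (\sum_(a : basis n) (a == restrict Q x)%:R *
   \sum_(b : basis n) (b == restrict Q y)%:R * (M a b * (agree_offb Q x y)%:R)).
  rewrite !sum_basis_delta.
  case: (agree_offP Q x y) => ag; last by rewrite H1 // mulr0.
  rewrite mulr1; apply: H2 => // i iQ; rewrite !ffunE ?iQ //; first by rewrite (negbTE iQ).
by apply: eq_bigr => a _; rewrite big_distrr; apply: eq_bigr => b _ /=; ring.
Qed.

Definition elem_pauli_coef (Q : seq 'I_n) (a b : basis n) (i : 'I_n) (k : 'I_4) : C :=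
  if i \in Q then ketbra1_coef C (a i) (b i) k else (k == ord0)%:R * (~~ a i && ~~ b i)%:R.

Lemma elem_factor_pauli (Q : seq 'I_n) (a b : basis n) i u v :
  elem_factor Q a b i u v = \sum_(k < 4) elem_pauli_coef Q a b i k * pauli1 C k u v.
Proof.
rewrite /elem_factor /elem_pauli_coef; case: (i \in Q); first by rewrite ketbra1_pauli_expansion.
rewrite (bigD1 ord0) //= big1 ?addr0; last by move=> k /negbTE ->; rewrite !mul0r.
rewrite mul1r /pauli1 /=.
by case: (u == v); case: (~~ a i && ~~ b i); rewrite /= ?mulr1 ?mulr0 ?mul0r.
Qed.

Lemma acts_on_pauli_expansion (Q : seq 'I_n) (M : op) : acts_on Q M ->
  exists c : {ffun 'I_n -> 'I_4} -> C,
    (forall p, c p != 0 -> forall i, i \notin Q -> p i = ord0) /\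
    M = fun x y => \sum_p c p * pauli_op C p x y.
Proof.
move=> HM.
exists (fun p => \sum_(a : basis n) \sum_(b : basis n) M a b * \prod_i elem_pauli_coef Q a b i (p i)).
split.
  move=> p cp i iQ; apply/eqP; apply: contraTT cp => pi; rewrite negbK; apply/eqP.
  rewrite big1 // => a _; rewrite big1 // => b _.
  by rewrite (bigD1 i) //= /elem_pauli_coef (negbTE iQ) (negbTE pi) !mul0r mulr0.
rewrite {1}(acts_on_elem_expansion HM); fext2.
under eq_bigr do under eq_bigr do
  rewrite (eq_tensor (elem_factor_pauli Q _ _)) tensor_pauli_expansion big_distrr.
under eq_bigr do rewrite exchange_big.
rewrite exchange_big; apply: eq_bigr => p _.
rewrite big_distrl; apply: eq_bigr => a _.
by rewrite big_distrl; apply: eq_bigr => b _ /=; rewrite mulrA.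
Qed.

Lemma acts_on_opmul (Q : seq 'I_n) (A B : op) :
  acts_on Q A -> acts_on Q B -> acts_on Q (opmul A B).
Proof.
move=> /acts_on_pauli_expansion [c [Hc ->]] /acts_on_pauli_expansion [d [Hd ->]].
have -> : opmul (fun x y => \sum_p c p * pauli_op C p x y)
                (fun x y => \sum_p d p * pauli_op C p x y)
  = fun x y => \sum_p c p * (\sum_p' d p' * opmul (pauli_op C p) (pauli_op C p') x y).
  fext2; rewrite /opmul.
  under eq_bigr do rewrite big_distrl /=.
  rewrite exchange_big; apply: eq_bigr => p _ /=.
  under eq_bigr do rewrite big_distrr /=.
  rewrite big_distrr /= exchange_big; apply: eq_bigr => p' _ /=.
  by rewrite big_distrr big_distrr; apply: eq_bigr => z _ /=; ring.
apply: acts_on_lincomb => p cp; apply: acts_on_lincomb => p' dp'.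
rewrite !pauli_opE tensor_mul; apply: acts_on_tensor => i iQ.
rewrite (Hc p cp i iQ) (Hd p' dp' i iQ); fext2.
by rewrite -(pauli1_mul_self C ord0).
Qed.

Lemma acts_on_adj (Q : seq 'I_n) (A : op) : acts_on Q A -> acts_on Q (adj A).
Proof.
move=> /acts_on_pauli_expansion [c [Hc ->]].
have -> : adj (fun x y => \sum_p c p * pauli_op C p x y)
  = fun x y => \sum_p (c p)^* * pauli_op C p x y.
  fext2; rewrite /adj rmorph_sum; apply: eq_bigr => p _.
  by rewrite rmorphM /= -[pauli_op C p x y](congr1 (fun M => M x y) (adj_pauli C p)).
apply: acts_on_lincomb => p cp; apply: acts_on_pauli; apply: Hc.
by apply: contraNneq cp => ->; rewrite rmorph0.
Qed.

End ActsOn.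

Section SingleQubit.
Variables (C : numClosedFieldType) (n : nat).
Local Notation op := (op C n).

Lemma op1_tensor (q : 'I_n) (M : bool -> bool -> C) :
  op1 q M = tensor (fun i => if i == q then M else @id1 C).
Proof.
fext2; rewrite /op1 /tensor (bigD1 q) //= eqxx.
rewrite (eq_bigr (fun i => (((i != q) ==> (x i == y i)) : bool)%:R)); last first.
  by move=> i /negbTE iq; rewrite iq /id1.
have -> : \prod_(i | i != q) (((i != q) ==> (x i == y i)) : bool)%:R =
          \prod_i (((i != q) ==> (x i == y i)) : bool)%:R :> C.
  by rewrite [RHS](bigD1 q) //= eqxx /= mul1r.
by rewrite prod_nat_forall; case: ifP => _; rewrite ?mulr1 ?mulr0.
Qed.

Definition pauliX : 'I_4 := Ordinal (isT : (1 < 4)%N).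

Definition xflip_index (q : 'I_n) (a : bool) : {ffun 'I_n -> 'I_4} :=
  [ffun i => if (i == q) && a then pauliX else ord0].
Definition xflip (q : 'I_n) (a : bool) : op := pauli_op C (xflip_index q a).

Lemma xflip_tensor (q : 'I_n) (a : bool) :
  xflip q a = tensor (fun i => if i == q then pauli1 C (if a then pauliX else ord0) else @id1 C).
Proof.
rewrite /xflip pauli_opE; apply: eq_tensor => i u v; rewrite /xflip_index ffunE.
by case: (i == q); case: a.
Qed.

Lemma pauli_on_xflip (q : 'I_n) (a : bool) : pauli_on [:: q] (xflip q a).
Proof. by exists (xflip_index q a); split => // i; rewrite inE /xflip_index ffunE => /negbTE ->. Qed.

Lemma adj_xflip (q : 'I_n) (a : bool) : adj (xflip q a) = xflip q a.
Proof. exact: adj_pauli. Qed.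

Lemma ketbra_tensor (q : 'I_n) (a b : bool) :
  ketbra C q a b = tensor (fun i => if i == q then (fun u v => ((u == a) && (v == b))%:R) else @id1 C).
Proof. exact: op1_tensor. Qed.

(* reduces an identity between tensors of single-qubit factors at q to the
   2x2 matrices at q *)
Ltac factor_at q := let i := fresh "i" in let u := fresh "u" in let v := fresh "v" in
  apply: eq_tensor => i u v; case: (i == q); last (by rewrite /id1 !big_bool; case: u; case: v;
    rewrite /= ?mulr0 ?mul0r ?mulr1 ?addr0 ?add0r);
  rewrite !big_bool /pauli1 /=.

Lemma ketbra_xflip0 (q : 'I_n) (a b : bool) : ketbra C q a b = opmul (xflip q a) (ketbra C q false b).
Proof.
rewrite !ketbra_tensor xflip_tensor tensor_mul; factor_at q.
by case: a; case: b; case: u; case: v; rewrite /= ?mulr0 ?mul0r ?mulr1 ?addr0 ?add0r.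
Qed.

Lemma ketbra_xflip_sandwich (q : 'I_n) (a b c : bool) :
  ketbra C q a b = opmul (opmul (xflip q (a (+) c)) (ketbra C q c c)) (xflip q (b (+) c)).
Proof.
rewrite !ketbra_tensor !xflip_tensor !tensor_mul; factor_at q.
by case: a; case: b; case: c; case: u; case: v; rewrite /= ?mulr0 ?mul0r ?mulr1 ?addr0 ?add0r.
Qed.

Lemma adj_ketbra (q : 'I_n) (a b : bool) : adj (ketbra C q a b) = ketbra C q b a.
Proof.
rewrite !ketbra_tensor adj_tensor; apply: eq_tensor => i u v.
case: (i == q); rewrite /id1; last by rewrite eq_sym; case: (u == v); rewrite ?rmorph1 ?rmorph0.
by rewrite andbC; case: (_ && _); rewrite ?rmorph1 ?rmorph0.
Qed.

Lemma ketbra_mul (q : 'I_n) (a b c d : bool) :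
  opmul (ketbra C q a b) (ketbra C q c d) = if b == c then ketbra C q a d else @opzero C n.
Proof.
case: ifP => bc.
  rewrite !ketbra_tensor tensor_mul; factor_at q; move/eqP: bc => <-.
  by case: a; case: b; case: d; case: u; case: v; rewrite /= ?mulr0 ?mul0r ?mulr1 ?addr0 ?add0r.
fext2; rewrite /opmul /opzero big1 // => z _.
rewrite !ketbra_tensor /tensor (bigD1 q) //= eqxx [X in _ * X](bigD1 q) //= eqxx.
by move: bc; case: b; case: c => // _; case: (z q); rewrite /= ?andbF ?andbT ?mul0r ?mulr0.
Qed.

Lemma ketbra_completeness (q : 'I_n) :
  opadd (ketbra C q false false) (ketbra C q true true) = @opid C n.
Proof.
rewrite -tensor_id1 !ketbra_tensor; fext2; rewrite /opadd /tensor.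
rewrite (bigD1 q) //= eqxx [X in _ + X](bigD1 q) //= eqxx [X in _ = X](bigD1 q) //=.
have off_q (a : bool) : \prod_(i | i != q)
     (if i == q then (fun u v : bool => ((u == a) && (v == a))%:R) else @id1 C) (x i) (y i)
   = \prod_(i | i != q) @id1 C (x i) (y i).
  by apply: eq_bigr => i /negbTE ->.
rewrite !off_q -mulrDl; congr (_ * _).
by case: (x q); case: (y q); rewrite /id1 /= ?addr0 ?add0r.
Qed.

Lemma acts_on_ketbra (q : 'I_n) (a b : bool) : acts_on [:: q] (ketbra C q a b).
Proof. by rewrite ketbra_tensor; apply: acts_on_tensor => i; rewrite inE => /negbTE ->. Qed.

Definition basis1 (q : 'I_n) (a : bool) : basis n := [ffun i => if i == q then a else false].

Lemma acts_on1_ketbra_expansion (q : 'I_n) (M : op) : acts_on [:: q] M ->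
  M = fun x y => \sum_(a : bool) \sum_(b : bool) M (basis1 q a) (basis1 q b) * ketbra C q a b x y.
Proof.
case=> H1 H2; fext2; rewrite /ketbra /op1.
case: (boolP [forall i, (i != q) ==> (x i == y i)]) => ag.
  have -> : M x y = M (basis1 q (x q)) (basis1 q (y q)).
    apply: H2.
    - by move=> i; rewrite inE => iq; have := implyP (forallP ag i) iq => /eqP.
    - by move=> i; rewrite inE => /negbTE iq; rewrite !ffunE iq.
    - by move=> i; rewrite inE => /eqP ->; rewrite ffunE eqxx.
    - by move=> i; rewrite inE => /eqP ->; rewrite ffunE eqxx.
  rewrite !big_bool /=.
  by case: (x q); case: (y q); rewrite /= ?mulr0 ?mulr1 ?addr0 ?add0r.
rewrite H1; first by rewrite !big1 // => a _; rewrite big1 // => b _; rewrite mulr0.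
move=> ag'; move: ag; rewrite negb_forall => /existsP [i]; rewrite negb_imply => /andP [iq].
by rewrite (ag' i) ?eqxx // inE.
Qed.

End SingleQubit.

Section KrausForms.
Variables (C : numClosedFieldType) (n : nat).
Local Notation op := (op C n).

Definition ideal_kraus (a : qaction C n) : seq op :=
  match a with
  | QSkip => [:: @opid C n]
  | QInit q => [:: ketbra C q false false; ketbra C q false true]
  | QUnit _ U => [:: U]
  | QMeas q c => [:: ketbra C q c c]
  end.

Lemma kraus1 (K rho : op) : kraus [:: K] rho = opmul (opmul K rho) (adj K).
Proof. by rewrite /kraus /= opadd0. Qed.

Lemma kraus2 (K K' rho : op) :
  kraus [:: K; K'] rho = opadd (opmul (opmul K rho) (adj K)) (opmul (opmul K' rho) (adj K')).
Proof. by rewrite /kraus /= opadd0. Qed.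

Lemma ideal_map_kraus (a : qaction C n) (rho : op) : ideal_map a rho = kraus (ideal_kraus a) rho.
Proof.
case: a => [|q|qs U|q c] /=.
- by rewrite kraus1 adj_opid opmul_idr opmul_idl.
- by rewrite kraus2 /init_map !adj_ketbra.
- by rewrite kraus1.
- by rewrite kraus1 /meas_map adj_ketbra.
Qed.

Lemma kraus_TP1 (K : op) : kraus_TP [:: K] <-> opmul (adj K) K = @opid C n.
Proof. by rewrite /kraus_TP /= opadd0. Qed.

Lemma pauli_onP (Q : seq 'I_n) (P : op) : pauli_on Q P ->
  [/\ adj P = P, opmul P P = @opid C n & acts_on Q P].
Proof. by case=> p [Hp ->]; split; [apply: adj_pauli | apply: pauli_mul_self | apply: acts_on_pauli]. Qed.

Lemma conj_kraus1l (P K rho : op) : adj P = P ->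
  opmul (opmul P (opmul (opmul K rho) (adj K))) P = opmul (opmul (opmul P K) rho) (adj (opmul P K)).
Proof. by move=> HP; rewrite adj_opmul HP !opmulA. Qed.

Lemma conj_kraus1r (Q K rho : op) : adj Q = Q ->
  opmul (opmul K (opmul (opmul Q rho) Q)) (adj K) = opmul (opmul (opmul K Q) rho) (adj (opmul K Q)).
Proof. by move=> HQ; rewrite adj_opmul HQ !opmulA. Qed.

Lemma init_pauli_kraus (q : 'I_n) (P rho : op) : adj P = P ->
  opmul (opmul P (init_map q rho)) P =
  kraus [:: opmul P (ketbra C q false false); opmul P (ketbra C q false true)] rho.
Proof. by move=> HP; rewrite kraus2 /init_map opmulDr opmulDl -!conj_kraus1l // !adj_ketbra. Qed.

Lemma unit_pauli_kraus (P U rho : op) : adj P = P ->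
  opmul (opmul P (unit_map U rho)) P = kraus [:: opmul P U] rho.
Proof. by move=> HP; rewrite kraus1 /unit_map conj_kraus1l. Qed.

Lemma meas_pauli_kraus (q : 'I_n) (c : bool) (P Q rho : op) : adj P = P -> adj Q = Q ->
  opmul (opmul P (meas_map q c (opmul (opmul Q rho) Q))) P =
  kraus [:: opmul (opmul P (ketbra C q c c)) Q] rho.
Proof.
move=> HP HQ; rewrite kraus1 /meas_map -{2}(adj_ketbra C q c c) conj_kraus1r // conj_kraus1l //.
by rewrite !adj_opmul !opmulA.
Qed.

Lemma init_pauli_tpcp (q : 'I_n) (P : op) : pauli_on [:: q] P ->
  tpcp_on [:: q] (fun rho => opmul (opmul P (init_map q rho)) P).
Proof.
move=> /pauli_onP [HP HPP HPa].
exists [:: opmul P (ketbra C q false false); opmul P (ketbra C q false true)]; split.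
  split; last by move=> rho; rewrite init_pauli_kraus.
  by case=> [|[|//]] _ /=; apply: acts_on_opmul => //; apply: acts_on_ketbra.
rewrite /kraus_TP /= opadd0 !adj_opmul !HP !opmulA -!(opmulA P P) HPP !opmul_idl.
by rewrite !adj_ketbra !ketbra_mul /= ketbra_completeness.
Qed.

Lemma unit_pauli_tpcp (qs : seq 'I_n) (P U : op) : pauli_on qs P -> unitary U -> acts_on qs U ->
  tpcp_on qs (fun rho => opmul (opmul P (unit_map U rho)) P).
Proof.
move=> /pauli_onP [HP HPP HPa] [HU _] HUa; exists [:: opmul P U]; split.
  by split; [case=> //= _; apply: acts_on_opmul | move=> rho; rewrite unit_pauli_kraus].
by apply/kraus_TP1; rewrite adj_opmul HP opmulA -(opmulA P P) HPP opmul_idl.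
Qed.

Lemma meas_pauli_fault_on (q : 'I_n) (P : bool -> op) (Q : op) :
  (forall c, pauli_on [:: q] (P c)) -> pauli_on [:: q] Q ->
  meas_fault_on [:: q]
    (fun rho => opmul (opmul (P false) (meas_map q false (opmul (opmul Q rho) Q))) (P false))
    (fun rho => opmul (opmul (P true) (meas_map q true (opmul (opmul Q rho) Q))) (P true)).
Proof.
move=> HPc /pauli_onP [HQ HQQ HQa].
have [HP0 HPP0 _] := pauli_onP (HPc false).
have [HP1 HPP1 _] := pauli_onP (HPc true).
have acts_kraus (c : bool) : acts_on [:: q] (opmul (opmul (P c) (ketbra C q c c)) Q).
  have [_ _ HPa] := pauli_onP (HPc c).
  by apply: acts_on_opmul => //; apply: acts_on_opmul => //; apply: acts_on_ketbra.
exists [:: opmul (opmul (P false) (ketbra C q false false)) Q],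
       [:: opmul (opmul (P true) (ketbra C q true true)) Q]; split; [|split].
- by split; [case=> // _; apply: acts_kraus | move=> rho; rewrite meas_pauli_kraus].
- by split; [case=> // _; apply: acts_kraus | move=> rho; rewrite meas_pauli_kraus].
rewrite /kraus_TP /= opadd0 !adj_opmul HQ HP0 HP1 !adj_ketbra.
have cancel_P (Pc : op) : opmul Pc Pc = @opid C n -> forall c,
   opmul (opmul Q (opmul (ketbra C q c c) Pc)) (opmul (opmul Pc (ketbra C q c c)) Q)
   = opmul (opmul Q (ketbra C q c c)) Q.
  move=> HPc2 c; rewrite !opmulA -(opmulA Pc Pc) HPc2 opmul_idl -(opmulA (ketbra C q c c)).
  by rewrite ketbra_mul eqxx.
by rewrite (cancel_P _ HPP0) (cancel_P _ HPP1) -opmulDl -opmulDr ketbra_completeness opmul_idr.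
Qed.

End KrausForms.

Section TreeSchema.
Variables (C : numClosedFieldType) (n : nat).
Local Notation op := (op C n).
Local Notation prog := (prog C n).
Local Notation tree := (tree C n).
Local Notation cfg := (cfg C n).

Definition walk_step (T : tree) (p : position) (c : cfg) (r : op) (b : bool) : option (cfg * op) :=
  match c.1 with
  | None => None
  | Some S1 =>
      let succ := step S1 c.2 in
      if (nat_of_bool b < size succ)%N then
        let t := nth (None, c.2, QSkip C n) succ (nat_of_bool b) in
        Some ((t.1.1, t.1.2), edge_map (T p) t.2 r)
      else None
  end.

Lemma walk_cat (T : tree) (pre : position) (c : cfg) (r : op) (v1 v2 : position) :
  walk T pre c r (v1 ++ v2) =
  if walk T pre c r v1 is Some (c', r') then walk T (pre ++ v1) c' r' v2 else None.
Proof.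
elim: v1 pre c r => [|b v1 IH] pre c r /=; first by rewrite cats0.
by case: c.1 => // S1; case: ifP => // _; rewrite IH cat_rcons.
Qed.

Lemma node_rcons (S : prog) (T : tree) (rho : op) (v : position) (b : bool) :
  node S T rho (rcons v b) =
  if node S T rho v is Some (c, r) then walk_step T v c r b else None.
Proof.
by rewrite /node -cats1 walk_cat; case: walk => // [[c r]].
Qed.

Lemma walk_fst (T T' : tree) (pre pre' : position) (c : cfg) (r r' : op) (v : position) :
  omap fst (walk T pre c r v) = omap fst (walk T' pre' c r' v).
Proof.
elim: v pre pre' c r r' => [|b v IH] pre pre' c r r' //=.
by case: c.1 => // S1; case: ifP => // _; apply: IH.
Qed.

Lemma schemaE (S : prog) (T : tree) (rho : op) (v : position) :
  schema S v = omap fst (node S T rho v).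
Proof. exact: walk_fst. Qed.

Lemma walk_ext (T T' : tree) (pre : position) (c : cfg) (r : op) (v : position) :
  (forall i, (i < size v)%N -> T (pre ++ take i v) = T' (pre ++ take i v)) ->
  walk T pre c r v = walk T' pre c r v.
Proof.
elim: v pre c r => [|b v IH] pre c r H //=.
case: c.1 => // S1; case: ifP => // _.
have -> : T pre = T' pre by have := H 0%N isT; rewrite take0 cats0.
by apply: IH => i Hi; have := H i.+1 Hi; rewrite /= cat_rcons.
Qed.

Definition qaction_of (S' : prog) (cs : cstate) (b : bool) : qaction C n :=
  (nth (None, cs, QSkip C n) (step S' cs) (nat_of_bool b)).2.

Lemma schema_rcons (S : prog) (v : position) (b : bool) : in_schema S (rcons v b) ->
  exists S' cs, [/\ schema S v = Some (Some S', cs), (nat_of_bool b < size (step S' cs))%N &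
   forall (T : tree) rho,
     qnode S T rho (rcons v b) = edge_map (T v) (qaction_of S' cs b) (qnode S T rho v)].
Proof.
rewrite /in_schema (schemaE _ (fun _ => Ideal C n) (@opzero C n)) node_rcons.
case E: (node S _ _ v) => [[c r]|] //.
rewrite /walk_step; case Ec : c => [[S'|] cs] //=; case: ifP => // Hb _.
exists S', cs; split => //; first by rewrite (schemaE _ (fun _ => Ideal C n) (@opzero C n)) E Ec.
move=> T rho.
have := walk_fst (fun _ => Ideal C n) T [::] [::] (Some S, empty_cstate) (@opzero C n) rho v.
rewrite -/(node _ _ _ v) -/(node _ _ _ v) E Ec /= /qnode node_rcons.
by case: (node S T rho v) => // [[c' r']] [<-]; rewrite /walk_step /= Hb.
Qed.

Lemma in_schema_prefix (S : prog) (v1 v2 : position) : in_schema S (v1 ++ v2) -> in_schema S v1.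
Proof. by rewrite /in_schema /schema /node walk_cat; case: walk. Qed.

Lemma internal_take (S : prog) (v : position) (i : nat) :
  in_schema S v -> (i < size v)%N -> internal S (take i v).
Proof.
move=> Hv Hi; move: Hv; rewrite -{1}(cat_take_drop i v).
case E: (drop i v) => [|b r]; first by move: Hi; rewrite -subn_gt0 -size_drop E.
rewrite -cat1s catA cats1 => /in_schema_prefix /schema_rcons [S' [cs [Hs _ _]]].
by exists S', cs.
Qed.

Definition tree_set (T : tree) (v0 : position) (ch : tchoice C n) : tree :=
  fun v => if v == v0 then ch else T v.

(* the transition chosen at v only affects the descendants of v *)
Lemma qnode_tree_set (S : prog) (T : tree) (v : position) (ch : tchoice C n) (rho : op) :
  qnode S (tree_set T v ch) rho v = qnode S T rho v.
Proof.
rewrite /qnode /node (walk_ext (T' := T)) // => i Hi /=; rewrite /tree_set.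
case: eqP => // E; have := congr1 size E; rewrite size_take Hi => /eqP.
by rewrite ltn_eqF.
Qed.

End TreeSchema.

Section Programs.
Variables (C : numClosedFieldType) (n : nat).
Local Notation op := (op C n).
Local Notation prog := (prog C n).
Local Notation qa := (qaction C n).

Definition step_shape (l : seq (option prog * cstate * qa)) : Prop :=
  [\/ exists o s', l = [:: (o, s', QSkip C n)],
      exists q o s', l = [:: (o, s', @QInit C n q)],
      exists qs U o s', l = [:: (o, s', @QUnit C n qs U)] |
      exists q o0 s0 o1 s1, l = [:: (o0, s0, @QMeas C n q false); (o1, s1, @QMeas C n q true)]].

Lemma stepP (S0 : prog) (s : cstate) : step_shape (step S0 s).
Proof.
elim: S0 s => [S1 IH1 S2 _|q|qs U|x q|x e|b S1 _ S2 _|y f x|S1 _ b|b S1 _] s /=.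
- case: (IH1 s) => [[o [s' ->]]|[q [o [s' ->]]]|[qs [U [o [s' ->]]]]|[q [o0 [s0 [o1 [s1 ->]]]]]] /=.
  + by apply: Or41; do 2 eexists.
  + by apply: Or42; do 3 eexists.
  + by apply: Or43; do 4 eexists.
  + by apply: Or44; do 5 eexists.
- by apply: Or42; do 3 eexists.
- by apply: Or43; do 4 eexists.
- by apply: Or44; do 5 eexists.
all: by apply: Or41; do 2 eexists.
Qed.

Definition step_wf (t : option prog * cstate * qa) : Prop :=
  (forall S'', t.1.1 = Some S'' -> wf_prog S'') /\
  (forall qs U, t.2 = @QUnit C n qs U -> unitary U /\ acts_on qs U).

Lemma step_preserves_wf (S0 : prog) (s : cstate) : wf_prog S0 ->
  forall t, List.In t (step S0 s) -> step_wf t.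
Proof.
elim: S0 s => [S1 IH1 S2 _|q|qs U|x q|x e|b S1 _ S2 _|y f x|S1 _ b|b S1 _] s /= Hwf t;
  rewrite /step_wf.
- case: Hwf => wf1 wf2 /List.in_map_iff [[[o1 s1] a1] [<- Hin]] /=.
  have [wf_o1 wf_a1] := IH1 s wf1 _ Hin; split=> // S'' [<-].
  by case: o1 {Hin wf_a1} wf_o1 => [S1'|] //= wf_o1; split=> //; apply: wf_o1.
- by case=> // <-.
- by case=> // <-; split=> // ? ? [<- <-].
- by case=> [<-|[<-|//]].
- by case=> // <-.
- by case=> // <-; split=> // S'' /= [<-]; case: Hwf; case: (b s).
- by case=> // <-.
- by case=> // <-; split=> // S'' [<-].
- by case=> // <-; split=> // S'' /=; case: (b s) => // [[<-]].
Qed.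

Lemma nth_List_In (A : Type) (d : A) (l : seq A) (i : nat) :
  (i < size l)%N -> List.In (nth d l i) l.
Proof. by elim: l i => [|a l IH] [|i] //= Hi; [left | right; apply: IH]. Qed.

Lemma schema_wf (S : prog) (v : position) (S' : prog) (cs : cstate) :
  wf_prog S -> schema S v = Some (Some S', cs) -> wf_prog S'.
Proof.
move=> HS; elim/last_ind: v S' cs => [|v b IH] S' cs; first by case=> <-.
rewrite (schemaE _ (fun _ => Ideal C n) (@opzero C n)) node_rcons.
case E: (node S _ _ v) => [[c r]|] //.
rewrite /walk_step; case Ec : c => [[S1|] cs1] //=; case: ifP => // Hb.
have wf1 : wf_prog S1.
  by apply: (IH S1 cs1); rewrite (schemaE _ (fun _ => Ideal C n) (@opzero C n)) E Ec.
have [wf_o _] := step_preserves_wf wf1 (nth_List_In (None, cs1, QSkip C n) Hb).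
by case=> Eo _; apply: wf_o; rewrite Eo.
Qed.

Definition unitaries_ok (S' : prog) (cs : cstate) : Prop :=
  forall o s' qs U l, step S' cs = (o, s', @QUnit C n qs U) :: l -> unitary U /\ acts_on qs U.

Lemma schema_unitaries_ok (S : prog) (v : position) (S' : prog) (cs : cstate) :
  wf_prog S -> schema S v = Some (Some S', cs) -> unitaries_ok S' cs.
Proof.
move=> HS Hs o s' qs U l Est.
have Hin : List.In (o, s', @QUnit C n qs U) (step S' cs) by rewrite Est; left.
by have [_ HU] := step_preserves_wf (schema_wf HS Hs) Hin; apply: HU.
Qed.

Lemma pauli_fault_ok_fault_ok (S' : prog) (cs : cstate) (E : bool -> op -> op) :
  unitaries_ok S' cs -> pauli_fault_ok S' cs E -> fault_ok S' cs E.
Proof.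
rewrite /unitaries_ok /pauli_fault_ok /fault_ok => HU.
case Est: (step S' cs) => [|[[o s'] a] l] //.
case: a Est => [|q|qs U|q c] Est //.
- case=> P [HP HE].
  have -> : E false = fun rho => opmul (opmul P (init_map q rho)) P by fext; apply: HE.
  exact: init_pauli_tpcp.
- case=> P [HP HE]; have [HUu HUa] := HU _ _ _ _ _ Est.
  have -> : E false = fun rho => opmul (opmul P (unit_map U rho)) P by fext; apply: HE.
  exact: unit_pauli_tpcp.
- case=> P [Q [HP [HQ HE]]].
  have -> : E false = fun rho =>
     opmul (opmul (P false) (meas_map q false (opmul (opmul Q rho) Q))) (P false) by fext; apply: HE.
  have -> : E true = fun rho =>
     opmul (opmul (P true) (meas_map q true (opmul (opmul Q rho) Q))) (P true) by fext; apply: HE.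
  exact: meas_pauli_fault_on.
Qed.

Lemma fault_ok_cases (S' : prog) (cs : cstate) (E : bool -> op -> op) (b : bool) :
  fault_ok S' cs E -> (nat_of_bool b < size (step S' cs))%N ->
  [\/ exists q o s' ks, [/\ step S' cs = [:: (o, s', @QInit C n q)],
        qaction_of S' cs b = @QInit C n q & cp_on [:: q] (E false) ks],
      exists qs U o s' ks, [/\ step S' cs = [:: (o, s', @QUnit C n qs U)],
        qaction_of S' cs b = @QUnit C n qs U & cp_on qs (E false) ks] |
      exists q o0 s0 o1 s1 ks, [/\ step S' cs = [:: (o0, s0, @QMeas C n q false); (o1, s1, @QMeas C n q true)],
        qaction_of S' cs b = @QMeas C n q b & cp_on [:: q] (E b) ks]].
Proof.
rewrite /fault_ok /qaction_of.
case: (stepP S' cs) => [[o [s' ->]]|[q [o [s' ->]]]|[qs [U [o [s' ->]]]]|[q [o0 [s0 [o1 [s1 ->]]]]]] //=.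
- by case=> ks [Hks _]; case: b => // _; apply: Or31; exists q, o, s', ks.
- by case=> ks [Hks _]; case: b => // _; apply: Or32; exists qs, U, o, s', ks.
- case=> ks0 [ks1 [H0 [H1 _]]] _; apply: Or33.
  by case: b; [exists q, o0, s0, o1, s1, ks1 | exists q, o0, s0, o1, s1, ks0].
Qed.

End Programs.

Section PauliTrees.
Variables (C : numClosedFieldType) (n : nat) (S : prog C n) (s : nat) (T : tree C n) (rho : op C n).
Hypotheses (wfS : wf_prog S) (HT : fault_tree s S T) (psd_rho : psd rho).
Local Notation op := (op C n).
Local Notation vec := (vec C n).
Local Notation tree := (tree C n).

Definition pauli_support (v : position) (w : vec) : Prop :=
  exists T' : tree, pauli_fault_tree s S T' /\ same_fault_locations S T T' /\
    in_supp (qnode S T' rho v) w.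

Lemma pauli_fault_tree_of (T' : tree) :
  same_fault_locations S T T' ->
  (forall v S' cs E, schema S v = Some (Some S', cs) -> T' v = Faulty E -> pauli_fault_ok S' cs E) ->
  pauli_fault_tree s S T'.
Proof.
move=> same HP; split => //; split.
  move=> v S' cs E Hs HE; apply: pauli_fault_ok_fault_ok; last exact: HP Hs HE.
  exact: schema_unitaries_ok wfS Hs.
move=> v Hv; have := (proj2 HT) v Hv.
suff -> : nfaults T' v = nfaults T v by [].
apply: eq_in_count => i; rewrite mem_iota add0n => /andP [_ Hi].
by rewrite same //; apply: internal_take.
Qed.

Lemma pauli_fault_tree_set (T' : tree) (v0 : position) (S' : prog C n) (cs : cstate) (G : bool -> op -> op) :
  pauli_fault_tree s S T' -> same_fault_locations S T T' ->
  schema S v0 = Some (Some S', cs) -> is_faulty (T v0) -> pauli_fault_ok S' cs G ->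
  pauli_fault_tree s S (tree_set T' v0 (Faulty G)) /\
  same_fault_locations S T (tree_set T' v0 (Faulty G)).
Proof.
move=> [_ HP] same Hs Hf HG.
have same' : same_fault_locations S T (tree_set T' v0 (Faulty G)).
  by move=> v Hv; rewrite /tree_set; case: eqP => [->|_]; [rewrite Hf | apply: same].
split=> //; apply: pauli_fault_tree_of => // v S1 cs1 E Hs1; rewrite /tree_set.
case: eqP => [E0 [<-]|_]; last exact: HP.
by move: Hs1; rewrite E0 Hs => [[<- <-]].
Qed.

Definition pauli_id : op := pauli_op C [ffun _ => ord0].

Lemma pauli_on_id (Q : seq 'I_n) : pauli_on Q pauli_id.
Proof. by exists [ffun _ => ord0]; split=> // i _; rewrite ffunE. Qed.

(* the ideal operation, written as a Pauli fault with identity Paulis *)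
Definition trivial_pauli_fault (S' : prog C n) (cs : cstate) : bool -> op -> op :=
  match step S' cs with
  | (_, _, QInit q) :: _ => fun _ r => opmul (opmul pauli_id (init_map q r)) pauli_id
  | (_, _, QUnit qs U) :: _ => fun _ r => opmul (opmul pauli_id (unit_map U r)) pauli_id
  | (_, _, QMeas q _) :: _ =>
      fun c r => opmul (opmul pauli_id (meas_map q c (opmul (opmul pauli_id r) pauli_id))) pauli_id
  | _ => fun _ r => r
  end.

Lemma trivial_pauli_fault_ok (S' : prog C n) (cs : cstate) (E : bool -> op -> op) :
  fault_ok S' cs E -> pauli_fault_ok S' cs (trivial_pauli_fault S' cs).
Proof.
rewrite /fault_ok /pauli_fault_ok /trivial_pauli_fault.
case: (step S' cs) => [|[[o s'] a] l] //; case: a => // [q|qs U|q c] _.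
- by exists pauli_id; split=> //; apply: pauli_on_id.
- by exists pauli_id; split=> //; apply: pauli_on_id.
- by exists (fun _ => pauli_id), pauli_id; split; [move=> ?|split] => //; apply: pauli_on_id.
Qed.

Definition trivial_pauli_tree : tree := fun v =>
  match T v, schema S v with
  | Faulty _, Some (Some S', cs) => Faulty (trivial_pauli_fault S' cs)
  | _, _ => Ideal C n
  end.

Lemma trivial_pauli_tree_ok :
  pauli_fault_tree s S trivial_pauli_tree /\ same_fault_locations S T trivial_pauli_tree.
Proof.
have same : same_fault_locations S T trivial_pauli_tree.
  by move=> v [S' [cs Hs]]; rewrite /trivial_pauli_tree Hs; case: (T v).
split=> //; apply: pauli_fault_tree_of => // v S' cs E Hs; rewrite /trivial_pauli_tree Hs.
case HTv: (T v) => [|E0] // [<-].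
exact: trivial_pauli_fault_ok ((proj1 HT) v S' cs E0 Hs HTv).
Qed.

Lemma edge_map_kraus (T' : tree) (v : position) (S' : prog C n) (cs : cstate) (b : bool) : fault_tree s S T' ->
  schema S v = Some (Some S', cs) -> (nat_of_bool b < size (step S' cs))%N ->
  exists ks, forall r, edge_map (T' v) (qaction_of S' cs b) r = kraus ks r.
Proof.
move=> HT' Hs Hb; case HTv: (T' v) => [|E].
  by exists (ideal_kraus (qaction_of S' cs b)) => r; rewrite /= ideal_map_kraus.
case: (fault_ok_cases ((proj1 HT') v S' cs E Hs HTv) Hb) =>
  [[q [o [s' [ks [_ -> [_ Hk]]]]]]|[qs [U [o [s' [ks [_ -> [_ Hk]]]]]]]
  |[q [o0 [s0 [o1 [s1 [ks [_ -> [_ Hk]]]]]]]]]; by exists ks.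
Qed.

Lemma qnode_psd (T' : tree) (v : position) : fault_tree s S T' -> in_schema S v ->
  psd (qnode S T' rho v).
Proof.
move=> HT'; elim/last_ind: v => [|v b IH] Hv; first by rewrite /qnode /node.
have [S' [cs [Hs Hb Hn]]] := schema_rcons Hv.
have [ks Hks] := edge_map_kraus HT' Hs Hb.
rewrite Hn Hks; apply/psd_kraus/IH.
by apply: (@in_schema_prefix _ _ S v [:: b]); rewrite cats1.
Qed.

Section EdgeSupport.
Variables (v : position) (b : bool) (S' : prog C n) (cs : cstate).
Hypotheses (Hs : schema S v = Some (Some S', cs))
  (Hn : forall (T' : tree) r,
     qnode S T' r (rcons v b) = edge_map (T' v) (qaction_of S' cs b) (qnode S T' r v)).

Lemma ideal_edge_support (i : nat) (w : vec) : T v = Ideal C n ->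
  (i < size (ideal_kraus (qaction_of S' cs b)))%N -> pauli_support v w ->
  pauli_support (rcons v b) (apply (nth (@opzero C n) (ideal_kraus (qaction_of S' cs b)) i) w).
Proof.
move=> HTv Hi [T' [PT' [same Hw]]]; exists T'; split=> //; split=> //.
have HT'v : T' v = Ideal C n.
  by have := same v (ex_intro _ S' (ex_intro _ cs Hs)); rewrite HTv; case: (T' v).
rewrite Hn HT'v /= ideal_map_kraus; apply: kraus_supp Hi Hw.
by apply: qnode_psd (proj1 PT') _; rewrite /in_schema Hs.
Qed.

(* witnessed by the Pauli tree T' with its transition at v replaced by G *)
Lemma pauli_edge_support (G : bool -> op -> op) (ks : seq op) (j : nat) (w : vec) :
  is_faulty (T v) -> pauli_fault_ok S' cs G ->
  (forall r, edge_map (Faulty G) (qaction_of S' cs b) r = kraus ks r) ->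
  (j < size ks)%N -> pauli_support v w ->
  pauli_support (rcons v b) (apply (nth (@opzero C n) ks j) w).
Proof.
move=> Hf HG Hks Hj [T' [PT' [same Hw]]].
have [PT'' same'] := pauli_fault_tree_set PT' same Hs Hf HG.
exists (tree_set T' v (Faulty G)); split=> //; split=> //.
have -> : qnode S (tree_set T' v (Faulty G)) rho (rcons v b) = kraus ks (qnode S T' rho v).
  by rewrite Hn qnode_tree_set /tree_set eqxx Hks.
apply: kraus_supp Hj Hw.
by apply: qnode_psd (proj1 PT') _; rewrite /in_schema Hs.
Qed.

Lemma init_edge_span (q : 'I_n) (o : option (prog C n)) (s' : cstate) (K : op) (w : vec) :
  is_faulty (T v) -> step S' cs = [:: (o, s', @QInit C n q)] ->
  qaction_of S' cs b = @QInit C n q -> acts_on [:: q] K -> pauli_support v w ->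
  span_gen (pauli_support (rcons v b)) (apply K w).
Proof.
move=> Hf Hst Hqa HK Hw.
rewrite (acts_on1_ketbra_expansion HK) apply_lincomb2.
apply: span_gen_sum => a _; apply: span_gen_sum => a' _; apply/span_scale/span_mem.
pose G (_ : bool) r := opmul (opmul (xflip C q a) (init_map q r)) (xflip C q a).
have -> : ketbra C q a a' =
    nth (@opzero C n) [:: opmul (xflip C q a) (ketbra C q false false);
                          opmul (xflip C q a) (ketbra C q false true)] a'.
  by rewrite ketbra_xflip0; case: a'.
apply: (pauli_edge_support (G := G)) => //; last by case: a'.
- by rewrite /pauli_fault_ok Hst; exists (xflip C q a); split=> //; apply: pauli_on_xflip.
- by move=> r; rewrite Hqa /= /G init_pauli_kraus // adj_xflip.
Qed.

Lemma unit_edge_span (qs : seq 'I_n) (U : op) (o : option (prog C n)) (s' : cstate) (K : op) (w : vec) :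
  is_faulty (T v) -> step S' cs = [:: (o, s', @QUnit C n qs U)] ->
  qaction_of S' cs b = @QUnit C n qs U -> acts_on qs K -> pauli_support v w ->
  span_gen (pauli_support (rcons v b)) (apply K w).
Proof.
move=> Hf Hst Hqa HK Hw.
have [[UU _] HUa] := schema_unitaries_ok wfS Hs Hst.
have [c [Hc HKU]] := acts_on_pauli_expansion (acts_on_opmul HK (acts_on_adj HUa)).
have -> : apply K w = apply (opmul K (adj U)) (apply U w).
  by rewrite -apply_opmul opmulA UU opmul_idr.
rewrite HKU apply_lincomb; apply: span_gen_sum => p _.
have [->|cp] := eqVneq (c p) 0.
  by have -> : (fun x => 0 * apply (pauli_op C p) (apply U w) x) = (fun _ => 0);
    [fext; rewrite mul0r | apply: span_zero].
apply/span_scale/span_mem; rewrite -apply_opmul.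
pose G (_ : bool) r := opmul (opmul (pauli_op C p) (unit_map U r)) (pauli_op C p).
apply: (pauli_edge_support (G := G) (ks := [:: opmul (pauli_op C p) U]) (j := 0)) => //.
- by rewrite /pauli_fault_ok Hst; exists (pauli_op C p); split=> //; exists p; split=> //; apply: Hc.
- by move=> r; rewrite Hqa /= /G unit_pauli_kraus // adj_pauli.
Qed.

Lemma meas_edge_span (q : 'I_n) (o0 o1 : option (prog C n)) (s0 s1 : cstate) (K : op) (w : vec) :
  is_faulty (T v) ->
  step S' cs = [:: (o0, s0, @QMeas C n q false); (o1, s1, @QMeas C n q true)] ->
  qaction_of S' cs b = @QMeas C n q b -> acts_on [:: q] K -> pauli_support v w ->
  span_gen (pauli_support (rcons v b)) (apply K w).
Proof.
move=> Hf Hst Hqa HK Hw.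
rewrite (acts_on1_ketbra_expansion HK) apply_lincomb2.
apply: span_gen_sum => a _; apply: span_gen_sum => a' _; apply/span_scale/span_mem.
pose P := xflip C q (a (+) b); pose Q := xflip C q (a' (+) b).
pose G c r := opmul (opmul P (meas_map q c (opmul (opmul Q r) Q))) P.
rewrite (ketbra_xflip_sandwich C q a a' b).
apply: (pauli_edge_support (G := G) (ks := [:: opmul (opmul P (ketbra C q b b)) Q]) (j := 0)) => //.
- rewrite /pauli_fault_ok Hst; exists (fun _ => P), Q.
  by split; [move=> _; apply: pauli_on_xflip | split; [apply: pauli_on_xflip |]].
- by move=> r; rewrite Hqa /= /G meas_pauli_kraus // adj_xflip.
Qed.

End EdgeSupport.

Lemma qnode_supp_span (v : position) : in_schema S v ->
  forall u, in_supp (qnode S T rho v) u -> span_gen (pauli_support v) u.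
Proof.
elim/last_ind: v => [|v b IH] Hv u Hu.
  apply: span_mem; have [PT same] := trivial_pauli_tree_ok.
  by exists trivial_pauli_tree; split=> //; split=> //; move: Hu; rewrite /qnode /node.
have [S' [cs [Hs Hb Hn]]] := schema_rcons Hv.
have {}IH := IH (@in_schema_prefix _ _ S v [:: b] ltac:(by rewrite cats1)).
rewrite Hn in Hu; case HTv : (T v) Hu => [|E] Hu.
  rewrite /= ideal_map_kraus in Hu; apply: (span_kraus_supp Hu IH) => i Hi w Hw.
  exact/span_mem/(ideal_edge_support Hs Hn HTv Hi Hw).
have Hf : is_faulty (T v) by rewrite HTv.
case: (fault_ok_cases ((proj1 HT) v S' cs E Hs HTv) Hb) =>
  [[q [o [s' [ks [Hst Hqa [HK Hks]]]]]]|[qs [U [o [s' [ks [Hst Hqa [HK Hks]]]]]]]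
  |[q [o0 [s0 [o1 [s1 [ks [Hst Hqa [HK Hks]]]]]]]]];
  rewrite Hqa /= Hks in Hu; apply: (span_kraus_supp Hu IH) => i Hi w Hw.
- exact: (init_edge_span Hs Hn Hf Hst Hqa (HK i Hi) Hw).
- exact: (unit_edge_span Hs Hn Hf Hst Hqa (HK i Hi) Hw).
- exact: (meas_edge_span Hs Hn Hf Hst Hqa (HK i Hi) Hw).
Qed.

End PauliTrees.

Theorem mainTheorem5 (C : numClosedFieldType) (n : nat) (S : prog C n) (s : nat)
  (T : tree C n) (rho : op C n) (v : position) :
  wf_prog S ->
  fault_tree s S T ->
  density rho ->
  in_schema S v ->
  forall u : vec C n,
    in_supp (qnode S T rho v) u ->
    in_span (fun w => exists T' : tree C n,
               pauli_fault_tree s S T' /\ same_fault_locations S T T' /\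
               in_supp (qnode S T' rho v) w) u.
Proof.
move=> wfS HT [psd_rho _] Hv u Hu.
exact/span_gen_in_span/(qnode_supp_span wfS HT psd_rho Hv Hu).
Qed.
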